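(* Let $M$ be a semiprime (or prime) right $R$-module such that $S=\mathrm{End}_R(M)$ satisfies the ascending chain condition on principal left ideals. Then the following are equivalent: (i) $M$ is a quasi-Baer module; (ii) $M$ is an endo-AIP module; (iii) $M$ is a centrally endo-AIP module.
   Context: For $N\le M$, $l_S(N)=\{\phi\in S:\phi(N)=0\}$. A fully invariant submodule $N$ of $M$ is prime in $M$ if for every ideal $T$ of $S$ and every fully invariant submodule $N'$ of $M$, $T(N')\subseteq N$ implies $T(M)\subseteq N$ or $N'\subseteq N$; $N$ is semiprime if it is an intersection of prime submodules of $M$. $M$ is a prime (semiprime) module if $\{0\}$ is prime (semiprime) in $M$. $M$ is quasi-Baer if $l_S(N)$ is a direct summand of $S$ (i.e. $l_S(N)=Se$ for an idempotent $e$) for every fully invariant submodule $N$. An ideal $I$ of $S$ is right s-unital if for every $a\in I$ there is $x\in I$ with $ax=a$, and centrally s-unital if for every $a\in I$ there is $z\in I$ central in $S$ with $az=a$. $M$ is endo-AIP (resp. centrally endo-AIP) if $l_S(N)$ is right s-unital (resp. centrally s-unital) for every fully invariant submodule $N$ of $M$. *)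

(* A right R-module is modelled as a left module over the
   converse ring R^c (so  r *: m  means  m·r). Endomorphisms act on the left,
   and the product in S = End_R(M) is composition: (phi psi)(m) = phi (psi m). *)
From HB Require Import structures.
From mathcomp Require Import all_boot all_order all_algebra.
Set Implicit Arguments. Unset Strict Implicit. Unset Printing Implicit Defensive.
Import GRing.Theory.
Local Open Scope ring_scope.

Section ModuleTheory.
Variables (R : nzRingType) (M : lmodType R^c).

Definition is_endo (f : M -> M) : Prop :=
  (forall x y, f (x + y) = f x + f y) /\ (forall (a : R^c) x, f (a *: x) = a *: f x).

Definition submodule (N : M -> Prop) : Prop :=
  N 0 /\ (forall x y, N x -> N y -> N (x + y)) /\ (forall (a : R^c) x, N x -> N (a *: x)).

Definition fully_invariant (N : M -> Prop) : Prop :=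
  submodule N /\ forall f, is_endo f -> forall x, N x -> N (f x).

Definition lS (N : M -> Prop) (f : M -> M) : Prop :=
  is_endo f /\ forall x, N x -> f x = 0.

Definition ideal (T : (M -> M) -> Prop) : Prop :=
  (forall f, T f -> is_endo f) /\ T (fun _ => 0) /\
  (forall f g, T f -> T g -> T (fun x => f x + g x)) /\
  (forall f, T f -> T (fun x => - f x)) /\
  (forall f g, is_endo g -> T f -> T (g \o f) /\ T (f \o g)).

Definition gen (A : M -> Prop) (x : M) : Prop :=
  forall N, submodule N -> (forall y, A y -> N y) -> N x.

Definition apply_ideal (T : (M -> M) -> Prop) (N : M -> Prop) : M -> Prop :=
  gen (fun y => exists f n, T f /\ N n /\ y = f n).

Definition subset (A B : M -> Prop) : Prop := forall x, A x -> B x.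

Definition prime_in (N : M -> Prop) : Prop :=
  fully_invariant N /\
  forall T N', ideal T -> fully_invariant N' ->
    subset (apply_ideal T N') N ->
    subset (apply_ideal T (fun _ => True)) N \/ subset N' N.

Definition semiprime_in (N : M -> Prop) : Prop :=
  fully_invariant N /\
  exists P : (M -> Prop) -> Prop,
    (forall Q, P Q -> prime_in Q) /\
    forall x, N x <-> (forall Q, P Q -> Q x).

Definition zero_sub : M -> Prop := fun x => x = 0.

Definition prime_module : Prop := prime_in zero_sub.
Definition semiprime_module : Prop := semiprime_in zero_sub.

Definition idempotent_endo (e : M -> M) : Prop := is_endo e /\ e \o e = e.

Definition principal_left (a : M -> M) (f : M -> M) : Prop :=
  exists g, is_endo g /\ f = g \o a.

Definition quasi_Baer : Prop :=
  forall N, fully_invariant N ->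
    exists e, idempotent_endo e /\
      forall f, lS N f <-> principal_left e f.

Definition right_s_unital (I : (M -> M) -> Prop) : Prop :=
  forall a, I a -> exists x, I x /\ a \o x = a.

Definition central (z : M -> M) : Prop :=
  forall s, is_endo s -> s \o z = z \o s.

Definition centrally_s_unital (I : (M -> M) -> Prop) : Prop :=
  forall a, I a -> exists z, I z /\ central z /\ a \o z = a.

Definition endo_AIP : Prop :=
  forall N, fully_invariant N -> right_s_unital (lS N).

Definition centrally_endo_AIP : Prop :=
  forall N, fully_invariant N -> centrally_s_unital (lS N).

Definition acc_principal_left : Prop :=
  forall a : nat -> (M -> M), (forall n, is_endo (a n)) ->
    (forall n f, principal_left (a n) f -> principal_left (a n.+1) f) ->
    exists k, forall m, (k <= m)%N -> forall f,
      principal_left (a m) f -> principal_left (a k) f.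

End ModuleTheory.

From Pilot Require Import Defs.
From mathcomp Require Import all_boot all_order all_algebra.
From Stdlib Require Import FunctionalExtensionality ClassicalEpsilon Classical.
Set Implicit Arguments. Unset Strict Implicit. Unset Printing Implicit Defensive.
Import GRing.Theory.
Local Open Scope ring_scope.

(* (i) => (iii): if l_S(N) = Se with e idempotent, then Se is a two-sided
   ideal, so es = ese for every s.  The values of se - ese lie in the
   intersection L of ker e and Se(M), a fully invariant submodule with Se(L) = 0, and
   semiprimeness forces L = 0; hence se = ese = es and e is a central right
   unit of l_S(N).
   (ii) => (i): by ACC pick a in l_S(N) with Sa maximal among the Sx, x in
   l_S(N), and a right unit e in l_S(N) of a.  Every right unit x in l_S(N) of
   a lies in Sa, so xe = x; thus e is idempotent, and for f in l_S(N) a common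
   right unit x of a and f gives f = fx = fxe = fe. *)

Section Module.
Variables (R : nzRingType) (M : lmodType R^c).
Implicit Types (a b f g s : M -> M) (N L Q : M -> Prop) (T I : (M -> M) -> Prop).

Lemma endo0 f : is_endo f -> f 0 = 0.
Proof. by move=> [fD _]; apply: (addrI (f 0)); rewrite -fD !addr0. Qed.

Lemma endoN f x : is_endo f -> f (- x) = - f x.
Proof. by move=> hf; apply: (addrI (f x)); rewrite -hf.1 !subrr endo0. Qed.

Lemma endoB f x y : is_endo f -> f (x - y) = f x - f y.
Proof. by move=> hf; rewrite hf.1 endoN. Qed.

Lemma endo_comp f g : is_endo f -> is_endo g -> is_endo (f \o g).
Proof. by move=> [fD fZ] [gD gZ]; split=> [x y|a x] /=; rewrite ?gD ?fD ?gZ ?fZ. Qed.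

Lemma principal_left_refl a : is_endo a -> principal_left a a.
Proof. by exists id. Qed.

Lemma principal_left_trans a b f :
  principal_left a b -> principal_left b f -> principal_left a f.
Proof.
by move=> [g [hg ->]] [h [hh ->]]; exists (h \o g); split; [exact: endo_comp |].
Qed.

Lemma gen_submodule (A : M -> Prop) : submodule (gen A).
Proof.
split; first by move=> N [].
split; first by move=> x y Ax Ay N hN AN; apply: hN.2.1; [exact: Ax | exact: Ay].
by move=> a x Ax N hN AN; apply: hN.2.2; exact: Ax.
Qed.

Lemma gen_in (A : M -> Prop) y : A y -> gen A y.
Proof. by move=> Ay N _; apply. Qed.

Lemma fully_invariantI N1 N2 : fully_invariant N1 -> fully_invariant N2 ->
  fully_invariant (fun x => N1 x /\ N2 x).
Proof.
move=> [[N10 [N1D N1Z]] N1f] [[N20 [N2D N2Z]] N2f].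
split; last by move=> f hf x [??]; split; [exact: N1f | exact: N2f].
split=> //; split; first by move=> x y [??] [??]; split; [exact: N1D | exact: N2D].
by move=> a x [??]; split; [exact: N1Z | exact: N2Z].
Qed.

Lemma apply_ideal_in T N f n : T f -> N n -> apply_ideal T N (f n).
Proof. by move=> Tf Nn; apply: gen_in; exists f, n. Qed.

Lemma apply_ideal_min T N Q : submodule Q ->
  (forall f n, T f -> N n -> Q (f n)) -> Defs.subset (apply_ideal T N) Q.
Proof. by move=> hQ TNQ x; apply => // _ [f [n [Tf [Nn ->]]]]; apply: TNQ. Qed.

Section Ideal.
Variables (T : (M -> M) -> Prop) (hT : ideal T).

Lemma ideal_endo f : T f -> is_endo f.
Proof. exact: hT.1. Qed.

Lemma ideal0 : T (fun _ => 0).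
Proof. exact: hT.2.1. Qed.

Lemma idealB f g : T f -> T g -> T (fun x => f x - g x).
Proof. by move=> Tf Tg; apply: hT.2.2.1 => //; apply: hT.2.2.2.1. Qed.

Lemma idealD f g : T f -> T g -> T (fun x => f x + g x).
Proof. exact: hT.2.2.1. Qed.

Lemma ideal_compl g f : is_endo g -> T f -> T (g \o f).
Proof. by move=> hg Tf; have [] := hT.2.2.2.2 f g hg Tf. Qed.

Lemma ideal_compr f g : is_endo g -> T f -> T (f \o g).
Proof. by move=> hg Tf; have [] := hT.2.2.2.2 f g hg Tf. Qed.

Lemma apply_ideal_fully_invariant : fully_invariant (apply_ideal T (fun _ => True)).
Proof.
split; first exact: gen_submodule.
move=> g hg x TMx.
have [TM0 [TMD TMZ]] := gen_submodule (fun y => exists f n, T f /\ True /\ y = f n).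
apply: (TMx (fun y => apply_ideal T (fun _ => True) (g y))).
  split; first by rewrite endo0 //; exact: TM0.
  split; first by move=> u v ??; rewrite hg.1; apply: TMD.
  by move=> a u ?; rewrite hg.2; apply: TMZ.
move=> _ [f [n [Tf [_ ->]]]].
exact: (apply_ideal_in (N := fun _ => True) (ideal_compl hg Tf) I).
Qed.

(* x1 + x2 - x1 x2 with x1 a right unit of a and x2 one of b - b x1. *)
Lemma right_s_unital_common_unit a b : right_s_unital T -> T a -> T b ->
  exists x, T x /\ a \o x = a /\ b \o x = b.
Proof.
move=> hu Ta Tb; have [ha hb] := (ideal_endo Ta, ideal_endo Tb).
have [x1 [Tx1 ax1]] := hu a Ta.
have [x2 [Tx2 bx2]] := hu _ (idealB Tb (ideal_compr (ideal_endo Tx1) Tb)).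
exists (fun y => x1 y + x2 y - x1 (x2 y)); split.
  exact: idealB (idealD Tx1 Tx2) (ideal_compr (ideal_endo Tx2) Tx1).
have ax1y y : a (x1 y) = a y := congr1 (fun h => h y) ax1.
have bx2y y : b (x2 y) - b (x1 (x2 y)) = b y - b (x1 y) := congr1 (fun h => h y) bx2.
split; apply: functional_extensionality => y /=.
  by rewrite endoB // ha.1 !ax1y addrK.
by rewrite endoB // hb.1 -addrA bx2y addrC subrK.
Qed.

End Ideal.

Lemma lS_ideal N : fully_invariant N -> ideal (lS N).
Proof.
move=> [_ Nf]; split; first by move=> f [].
split; first by split; [split=> *; rewrite ?addr0 ?scaler0 | ].
split.
  move=> f g [hf fN] [hg gN]; split; last by move=> x Nx; rewrite fN // gN // addr0.
  by split=> [x y|a x]; [rewrite hf.1 hg.1 addrACA | rewrite hf.2 hg.2 scalerDr].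
split.
  move=> f [hf fN]; split; last by move=> x Nx; rewrite fN // oppr0.
  by split=> [x y|a x]; [rewrite hf.1 opprD | rewrite hf.2 scalerN].
move=> f g hg [hf fN]; split; split; try exact: endo_comp.
  by move=> x Nx /=; rewrite fN // endo0.
by move=> x Nx /=; rewrite fN //; apply: Nf.
Qed.

Lemma prime_in_semiprime_in Q : prime_in Q -> semiprime_in Q.
Proof.
move=> hQ; split; first exact: hQ.1.
by exists (eq Q); split=> [_ <- //|x]; split=> [Qx _ <- // | ]; apply.
Qed.

Lemma prime_in_absorb Q T L : prime_in Q -> ideal T -> fully_invariant L ->
  Defs.subset (apply_ideal T L) Q -> Defs.subset L (apply_ideal T (fun _ => True)) ->
  Defs.subset L Q.
Proof.
move=> [_ hQ] hT hL TLQ LTM.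
by case: (hQ T L hT hL TLQ) => [TMQ x Lx | //]; apply: TMQ; apply: LTM.
Qed.

Lemma semiprime_module_annihilated T L :
  semiprime_module M -> ideal T -> fully_invariant L ->
  (forall f n, T f -> L n -> f n = 0) ->
  Defs.subset L (apply_ideal T (fun _ => True)) -> forall x, L x -> x = 0.
Proof.
move=> [_ [P [Pprime Pdef]]] hT hL TL0 LTM x Lx; apply/Pdef => Q PQ.
apply: (prime_in_absorb (Pprime Q PQ) hT hL) => //.
apply: apply_ideal_min => [|f n Tf Ln]; first exact: (Pprime Q PQ).1.1.
by rewrite TL0 //; exact: (Pprime Q PQ).1.1.1.
Qed.

Section QuasiBaerIdempotent.
Variables (N : M -> Prop) (e : M -> M).
Hypotheses (hsp : semiprime_module M) (hN : fully_invariant N)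
  (he : idempotent_endo e) (lSE : forall f, lS N f <-> principal_left e f).

Let hlS := lS_ideal hN.

Lemma idemK x : e (e x) = e x.
Proof. by case: he => _ ee; rewrite -{3}ee. Qed.

Lemma lS_idem : lS N e.
Proof. by apply/lSE/principal_left_refl; exact: he.1. Qed.

Lemma lS_ker_idem f n : lS N f -> e n = 0 -> f n = 0.
Proof. by move=> /lSE [g [hg ->]] /= ->; rewrite endo0. Qed.

Lemma idem_right_semicentral s x : is_endo s -> e (s (e x)) = e (s x).
Proof.
move=> hs; have /lSE [g [_ es]] := ideal_compr hlS hs lS_idem.
have esx y : e (s y) = g (e y) by rewrite -[LHS]/((e \o s) y) es.
by rewrite !esx idemK.
Qed.

Lemma ker_idem_fully_invariant : fully_invariant (fun y => e y = 0).
Proof.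
split; last first.
  move=> f hf y ey; apply: (@lS_ker_idem (e \o f)) => //.
  exact: (ideal_compr hlS hf lS_idem).
have [eD eZ] := he.1; split; first exact: endo0 he.1.
by split=> [x y ex ey|a x ex]; rewrite ?eD ?eZ ?ex ?ey ?addr0 ?scaler0.
Qed.

Lemma idem_left_semicentral s x : is_endo s -> s (e x) = e (s (e x)).
Proof.
move=> hs; apply/eqP; rewrite -subr_eq0; apply/eqP.
pose L y := e y = 0 /\ apply_ideal (lS N) (fun _ => True) y.
have hL : fully_invariant L.
  exact: (fully_invariantI ker_idem_fully_invariant (apply_ideal_fully_invariant hlS)).
apply: (semiprime_module_annihilated hsp hlS hL).
- by move=> f n lSf [en _]; exact: lS_ker_idem.
- by move=> y [].
split; first by rewrite endoB ?idemK ?subrr //; exact: he.1.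
have lSse : lS N (s \o e) := ideal_compl hlS hs lS_idem.
have lSd : lS N (fun z => s (e z) - e (s (e z))).
  exact: (idealB hlS lSse (ideal_compl hlS he.1 lSse)).
exact: (apply_ideal_in (N := fun _ => True) lSd I).
Qed.

Lemma idem_central : central e.
Proof.
move=> s hs; apply: functional_extensionality => x /=.
by rewrite idem_left_semicentral // idem_right_semicentral.
Qed.

End QuasiBaerIdempotent.

Lemma quasi_Baer_centrally_endo_AIP :
  semiprime_module M -> quasi_Baer M -> centrally_endo_AIP M.
Proof.
move=> hsp hqb N hN a lSa; have [e [he lSE]] := hqb N hN.
exists e; split; first exact: (lS_idem he lSE).
split; first exact: (idem_central hsp hN he lSE).
have [g [_ ->]] := (lSE a).1 lSa.
by apply: functional_extensionality => x /=; rewrite (idemK he).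
Qed.

Lemma centrally_endo_AIP_endo_AIP : centrally_endo_AIP M -> endo_AIP M.
Proof. by move=> hc N hN a lSa; have [z [lSz [_ az]]] := hc N hN a lSa; exists z. Qed.

Lemma acc_principal_left_maximal I a0 : acc_principal_left M ->
  (forall f, I f -> is_endo f) -> I a0 ->
  exists a, I a /\ forall x, I x -> principal_left x a -> principal_left a x.
Proof.
move=> hacc Iendo Ia0; apply: NNPP => nomax.
pose P a x := I x /\ principal_left x a /\ ~ principal_left a x.
have step a : I a -> exists x, P a x.
  move=> Ia; apply: NNPP => nox; apply: nomax; exists a; split=> // x Ix xa.
  by apply: NNPP => ax; apply: nox; exists x.
pose chain n := iter n (fun a => epsilon (inhabits id) (P a)) a0.
have Pchain n : I (chain n) /\ P (chain n) (chain n.+1).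
  elim: n => [|n [_ IH]]; last by split; [exact: IH.1 | exact: epsilon_spec (step _ IH.1)].
  by split=> //; exact: epsilon_spec (step _ Ia0).
have [k stable] := hacc chain (fun n => Iendo _ (Pchain n).1)
  (fun n f => principal_left_trans (Pchain n).2.2.1).
have [_ [_ strict]] := (Pchain k).2; apply/strict/(stable k.+1) => //.
exact/principal_left_refl/Iendo/(Pchain k.+1).1.
Qed.

Lemma right_s_unital_maximal_idempotent T a : ideal T -> right_s_unital T -> T a ->
  (forall x, T x -> principal_left x a -> principal_left a x) ->
  exists e, idempotent_endo e /\ forall f, T f <-> principal_left e f.
Proof.
move=> hT hu Ta amax; have ha := ideal_endo hT Ta.
have [e [Te ae]] := hu a Ta; have he := ideal_endo hT Te.
have Sa_sub x : T x -> a \o x = a -> principal_left a x.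
  by move=> Tx ax; apply: amax => //; exists a; split.
have aey y : a (e y) = a y := congr1 (fun h => h y) ae.
have xe x : T x -> a \o x = a -> x \o e = x.
  move=> Tx ax; have [t [ht ->]] := Sa_sub x Tx ax.
  by apply: functional_extensionality => y /=; rewrite aey.
exists e; split; first by split=> //; exact: xe.
move=> f; split; last by move=> [g [hg ->]]; exact: ideal_compl.
move=> Tf; have [x [Tx [ax fx]]] := right_s_unital_common_unit hT hu Ta Tf.
exists f; split; first exact: (ideal_endo hT Tf).
by rewrite -{1}fx -(xe x Tx ax) -[f \o (x \o e)]/((f \o x) \o e) fx.
Qed.

Lemma endo_AIP_quasi_Baer : acc_principal_left M -> endo_AIP M -> quasi_Baer M.
Proof.
move=> hacc haip N hN; have hlS := lS_ideal hN.
have [a [lSa amax]] := acc_principal_left_maximal hacc (ideal_endo hlS) (ideal0 hlS).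
exact: (right_s_unital_maximal_idempotent hlS (haip N hN) lSa amax).
Qed.

End Module.

Theorem proposition3p10 (R : nzRingType) (M : lmodType R^c) :
  (semiprime_module M \/ prime_module M) ->
  acc_principal_left M ->
  (quasi_Baer M <-> endo_AIP M) /\ (endo_AIP M <-> centrally_endo_AIP M).
Proof.
move=> hsp hacc.
have {hsp} hsp : semiprime_module M by case: hsp => [//|]; exact: prime_in_semiprime_in.
have qb_aip := endo_AIP_quasi_Baer hacc.
have qb_caip := quasi_Baer_centrally_endo_AIP hsp.
have caip_aip := @centrally_endo_AIP_endo_AIP R M.
by split; split; auto.
Qed.
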